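(* Let $X$ and $Y$ be locally compact paracompact Hausdorff spaces with countable bases, let $\varepsilon$ be a coarsely connected proper coarse structure on $X$ and $\zeta$ a coarsely connected proper coarse structure on $Y$, and suppose there is a coarse equivalence $\pi:(Y,\zeta)\to(X,\varepsilon)$ (not necessarily continuous). Then the categories $\mathrm{MPers}(\varepsilon)$ and $\mathrm{MPers}(\zeta)$ are isomorphic.
   Context: Artin–Wraith glueing: $\mathrm{Closed}(A)$ is the set of closed subsets of a space $A$. A map $f:\mathrm{Closed}(A)\to\mathrm{Closed}(B)$ is admissible if $f(\emptyset)=\emptyset$ and $f(F_1\cup F_2)=f(F_1)\cup f(F_2)$. For admissible $f$, $A+_fB$ is $A\sqcup B$ with closed sets the $D$ with $D\cap A$ closed in $A$, $D\cap B$ closed in $B$ and $f(D\cap A)\subseteq D$. $\mathrm{Comp}(X)$: objects are compact spaces $X+_fW$ with $W$ compact Hausdorff, morphisms continuous maps restricting to the identity on $X$. Coarse notions (Roe): a coarse structure on $X$ is a family of subsets of $X\times X$ containing the diagonal, closed under subsets, finite unions, inverses and compositions; bounded sets are $B$ with $B\times B$ in the structure; proper means the structure contains a neighbourhood of the diagonal and bounded sets are relatively compact; coarsely connected means every $\{(x,y)\}$ belongs to it. Coarse maps send controlled sets (via $h\times h$) to controlled sets and have bounded preimages of bounded sets; a coarse equivalence is a coarse map with a coarse quasi-inverse such that both composites are close to the identities (two maps $h,h'$ are close if $\{(h(s),h'(s))\}$ is controlled). For a Hausdorff compactification $X+_fW$ of $X$ ($X$ dense), $e\subseteq X\times X$ is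 perspective if $\mathrm{Cl}_{(X+_fW)^2}(e)\cap((X+_fW)^2-X^2)\subseteq\{(p,p):p\in W\}$; $\varepsilon_f$ is the set of perspective sets. The compactification is perspective for $\varepsilon$ if $\varepsilon\subseteq\varepsilon_f$. $\mathrm{Pers}(\varepsilon)$ is the full subcategory of $\mathrm{Comp}(X)$ of perspective compactifications, and $\mathrm{MPers}(\varepsilon)$ is its full subcategory of metrizable objects. *)

From HB Require Import structures.
From mathcomp Require Import all_boot all_order all_algebra.
From mathcomp Require Import all_classical all_reals all_analysis.
From mathcomp Require Import Rstruct.
Set Implicit Arguments. Unset Strict Implicit. Unset Printing Implicit Defensive.
Import Order.TTheory GRing.Theory Num.Theory.
Local Open Scope classical_set_scope.

Section Glue.
Context (X W : topologicalType).

Record admissible := Admissible {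
  amap :> set X -> set W;
  amap_closed : forall F, closed F -> closed (amap F);
  amap_junk : forall F, ~ closed F -> amap F = set0;
  amap0 : amap set0 = set0;
  amapU : forall F1 F2, closed F1 -> closed F2 ->
    amap (F1 `|` F2) = amap F1 `|` amap F2 }.

Lemma amap_mono (f : admissible) (P Q : set X) : closed P -> closed Q ->
  P `<=` Q -> f P `<=` f Q.
Proof.
move=> cP cQ PQ; rewrite -(setUidr PQ) amapU //; by move=> w fw; left.
Qed.

Definition glue (f : admissible) : Type := (X + W)%type.

Definition glue_closed (f : admissible) (D : set (X + W)) :=
  [/\ closed (@inl X W @^-1` D), closed (@inr X W @^-1` D)
    & f (@inl X W @^-1` D) `<=` @inr X W @^-1` D].

Variable f : admissible.

Definition glue_open (U : set (glue f)) := glue_closed f (~` U).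

Lemma glue_opT : glue_open setT.
Proof.
rewrite /glue_open /glue_closed setCT !preimage_set0 amap0.
by split => //; exact: closed0.
Qed.

Lemma glue_opI : setI_closed glue_open.
Proof.
move=> U V [cU1 cU2 fU] [cV1 cV2 fV]; rewrite /glue_open setCI.
rewrite /glue_closed !preimage_setU; split; [exact: closedU|exact: closedU|].
by rewrite amapU // => w [/fU|/fV]; [left|right].
Qed.

Lemma glue_op_bigU (I : Type) (g : I -> set (glue f)) :
  (forall i, glue_open (g i)) -> glue_open (\bigcup_i g i).
Proof.
move=> hg; rewrite /glue_open setC_bigcup /glue_closed !preimage_bigcap.
split; [apply: closed_bigI => i _; by case: (hg i)
       |apply: closed_bigI => i _; by case: (hg i)|].
move=> w fw i _; have [c1 _ fi] := hg i; apply: fi.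
apply: amap_mono fw => //; first by apply: closed_bigI => j _; case: (hg j).
by move=> x; apply.
Qed.

HB.instance Definition _ := Choice.on (glue f).
HB.instance Definition _ :=
  isOpenTopological.Build (glue f) glue_opT glue_opI glue_op_bigU.

Definition ginl : X -> glue f := @inl X W.
Definition ginr : W -> glue f := @inr X W.

End Glue.

Lemma glue_openE (X W : topologicalType) (f : admissible X W) :
  @open (glue f) = @glue_open X W f.
Proof. by []. Qed.

Definition paracompact (T : topologicalType) :=
  forall (I : Type) (U : I -> set T), (forall i, open (U i)) ->
    \bigcup_i U i = setT ->
  exists (J : Type) (V : J -> set T),
    [/\ (forall j, open (V j)), \bigcup_j V j = setT,
        (forall j, exists i, V j `<=` U i)
      & (forall x : T, exists N, nbhs x N /\
           finite_set [set j | V j `&` N !=set0])].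

Definition metrizable (T : topologicalType) :=
  exists d : T -> T -> Rdefinitions.R,
  [/\ (forall x y, d x y = 0%R <-> x = y),
      (forall x y, d x y = d y x),
      (forall x y z, (d x z <= d x y + d y z)%R)
    & (forall A : set T, open A <->
        (forall x, A x -> exists e : Rdefinitions.R, (0 < e)%R /\
           [set y | (d x y < e)%R] `<=` A))].

Record category := Category {
  Ob : Type;
  Hom : Ob -> Ob -> Type;
  cid : forall a, Hom a a;
  ccomp : forall x y z, Hom y z -> Hom x y -> Hom x z }.
Arguments Hom : clear implicits.
Arguments cid {c} a.
Arguments ccomp {c x y z}.

Record functor (C D : category) := Functor {
  F0 : Ob C -> Ob D;
  F1 : forall a b, Hom C a b -> Hom D (F0 a) (F0 b);
  F_id : forall a, F1 (cid a) = cid (F0 a);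
  F_comp : forall a b c (g : Hom C b c) (h : Hom C a b),
    F1 (ccomp g h) = ccomp (F1 g) (F1 h) }.
Arguments F1 {C D} f {a b}.

Definition castHom (C : category) (a a' b b' : Ob C) (ea : a = a') (eb : b = b')
  (h : Hom C a b) : Hom C a' b' :=
  match ea in _ = a1 return Hom C a1 b' with
  | erefl => match eb in _ = b1 return Hom C a b1 with erefl => h end
  end.

Definition cat_iso (C D : category) : Prop :=
  exists (F : functor C D) (G : functor D C)
    (eGF : forall a, F0 G (F0 F a) = a) (eFG : forall b, F0 F (F0 G b) = b),
    (forall a b (h : Hom C a b), castHom (eGF a) (eGF b) (F1 G (F1 F h)) = h) /\
    (forall a b (h : Hom D a b), castHom (eFG a) (eFG b) (F1 F (F1 G h)) = h).

Record compObj (X : topologicalType) := CompObj {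
  cW : topologicalType;
  cf : admissible X cW;
  cW_compact : compact [set: cW];
  cW_hausdorff : hausdorff_space cW;
  c_compact : compact [set: glue cf] }.

Definition compHom (X : topologicalType) (a b : compObj X) :=
  {h : glue (cf a) -> glue (cf b) |
     continuous h /\ forall x : X, h (ginl (cf a) x) = ginl (cf b) x}.

Definition compHom_id (X : topologicalType) (a : compObj X) : compHom a a.
Proof. by exists id; split => // x; apply: cvg_id. Defined.

Definition compHom_comp (X : topologicalType) (a b c : compObj X)
  (g : compHom b c) (h : compHom a b) : compHom a c.
Proof.
exists (proj1_sig g \o proj1_sig h); split.
- move=> x; apply: continuous_comp; [exact: (proj1 (proj2_sig h))|].
  exact: (proj1 (proj2_sig g)).
- by move=> x /=; rewrite (proj2 (proj2_sig h)) (proj2 (proj2_sig g)).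
Defined.

Definition Comp (X : topologicalType) : category :=
  @Category (compObj X) (@compHom X) (@compHom_id X) (@compHom_comp X).

Definition diagonal (T : Type) : set (T * T) := [set p | p.1 = p.2].
Arguments diagonal : clear implicits.
Definition rel_inv (T : Type) (e : set (T * T)) : set (T * T) :=
  [set p | e (p.2, p.1)].
Definition rel_comp (T : Type) (e e' : set (T * T)) : set (T * T) :=
  [set p | exists y, e (p.1, y) /\ e' (y, p.2)].

Definition coarse_structure (T : Type) (E : set (set (T * T))) :=
  [/\ E (diagonal T),
      (forall e e', E e -> e' `<=` e -> E e'),
      (forall e e', E e -> E e' -> E (e `|` e')),
      (forall e, E e -> E (rel_inv e))
    & (forall e e', E e -> E e' -> E (rel_comp e e'))].

Definition bounded_for (T : Type) (E : set (set (T * T))) (B : set T) :=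
  E (B `*` B).

Definition proper_coarse (T : topologicalType) (E : set (set (T * T))) :=
  [/\ coarse_structure E,
      (exists N, E N /\ exists U : set (T * T),
          [/\ open U, diagonal T `<=` U & U `<=` N])
    & (forall B, bounded_for E B -> compact (closure B))].

Definition coarsely_connected (T : Type) (E : set (set (T * T))) :=
  forall x y : T, E [set (x, y)].

Definition coarse_map (S T : Type) (ES : set (set (S * S)))
  (ET : set (set (T * T))) (h : S -> T) :=
  (forall e, ES e -> ET ((fun p => (h p.1, h p.2)) @` e)) /\
  (forall B, bounded_for ET B -> bounded_for ES (h @^-1` B)).

Definition close_maps (S T : Type) (ET : set (set (T * T))) (h h' : S -> T) :=
  ET (range (fun s => (h s, h' s))).

Definition coarse_equivalence (S T : Type) (ES : set (set (S * S)))
  (ET : set (set (T * T))) (h : S -> T) :=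
  coarse_map ES ET h /\
  exists h' : T -> S, [/\ coarse_map ET ES h',
     close_maps ES (h' \o h) id & close_maps ET (h \o h') id].

Definition is_compactification (X : topologicalType) (o : compObj X) :=
  hausdorff_space (glue (cf o)) /\ closure (range (ginl (cf o))) = setT.

Definition perspective (X : topologicalType) (o : compObj X) (e : set (X * X)) :=
  closure ((fun p : X * X => (ginl (cf o) p.1, ginl (cf o) p.2)) @` e)
    `&` ~` range (fun p : X * X => (ginl (cf o) p.1, ginl (cf o) p.2))
  `<=` range (fun w : cW o => (ginr (cf o) w, ginr (cf o) w)).

Definition MPers_obj (X : topologicalType) (E : set (set (X * X)))
  (o : compObj X) :=
  [/\ is_compactification o, E `<=` perspective o & metrizable (glue (cf o))].

Definition MPers (X : topologicalType) (E : set (set (X * X))) : category :=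
  @Category {o : compObj X | MPers_obj E o}
    (fun a b => compHom (proj1_sig a) (proj1_sig b))
    (fun a => compHom_id (proj1_sig a))
    (fun a b c g h => compHom_comp g h).

(* Let X +_f W be a metrizable perspective compactification of X and pi' a
   coarse inverse of pi.  The map g F := f (cl (pi F)) on closed subsets of Y is
   admissible, and Y +_g W is again a compact, Hausdorff, metrizable
   compactification: coarse maps send compact sets to bounded ones, whose
   closures are compact and have empty image under f, and perspectivity makes
   f blind to replacing a closed set by a controlled neighbourhood of it, which
   also shows that every zeta-controlled set is perspective for g.  Morphisms of
   Comp(X) fix X and hence map boundary to boundary, so they are transported by
   keeping their boundary part.  Pulling back along pi' returns f because
   pi \o pi' is close to the identity, and symmetrically on the other side. *)

From HB Require Import structures.
From mathcomp Require Import all_boot all_order all_algebra.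
From mathcomp Require Import all_classical all_reals all_analysis.
From mathcomp Require Import Rstruct Rstruct_topology ring lra.
From Stdlib Require Eqdep.
Set Implicit Arguments. Unset Strict Implicit. Unset Printing Implicit Defensive.
Import Order.TTheory GRing.Theory Num.Theory.
Local Open Scope classical_set_scope.

Lemma closure_sub_closed (T : topologicalType) (A B : set T) :
  closed B -> A `<=` B -> closure A `<=` B.
Proof. by move=> cB AB; rewrite [B](closure_id B).1 //; exact: closureS. Qed.

Lemma hausdorff_openP (T : topologicalType) : hausdorff_space T <->
  (forall p q : T, p <> q ->
    exists U V, [/\ open U, open V, U p, V q & U `&` V = set0]).
Proof.
rewrite open_hausdorff; split => [h p q /eqP pq|h p q /eqP pq].
  have [[U V] /= [/set_mem Up /set_mem Vq] [oU oV /eqP UV]] := h p q pq.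
  by exists U, V.
have [U [V [oU oV Up Vq UV]]] := h p q pq.
by exists (U, V) => /=; [split; exact/mem_set | split => //; exact/eqP].
Qed.

Lemma locally_compact_nbhs (T : topologicalType) : locally_compact [set: T] ->
  forall x : T, exists C, [/\ nbhs x C, compact C & closed C].
Proof. by move=> lc x; have [C] := lc x I; rewrite withinET => nC [cC clC]; exists C. Qed.

Lemma compact_local (T : topologicalType) (P : set T -> Prop) (C : set T) :
  compact C -> P set0 -> (forall A B, P A -> P B -> P (A `|` B)) ->
  (forall A B, A `<=` B -> P B -> P A) ->
  (forall x, C x -> exists V, nbhs x V /\ P V) -> P C.
Proof.
(* Otherwise the sets [C `\` V] with [P V] generate a proper filter on [C],
   whose cluster points have no neighbourhood satisfying [P]. *)
move=> cC P0 PU PS loc; apply: contrapT => nPC.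
pose G := filter_from P (fun V => C `\` V).
have FG : Filter G.
  apply: filter_from_filter; first by exists set0.
  move=> V1 V2 p1 p2; exists (V1 `|` V2); first exact: PU.
  by move=> x [Cx nV]; split; split => // h; apply: nV; [left|right].
have PG : ProperFilter G.
  apply: filter_from_proper => V PV; apply/set0P/negP => /eqP h.
  apply: nPC; apply: (PS _ V) PV => x Cx; apply: contrapT => nVx.
  have : (C `\` V) x by [].
  by rewrite h.
have [p [Cp clp]] := cC G PG (ex_intro2 _ _ set0 P0 (fun x '(conj Cx _) => Cx)).
have [V [nV PV]] := loc p Cp.
by have [x [[_ nVx] Vx]] := clp (C `\` V) V (ex_intro2 _ _ V PV (fun _ h => h)) nV.
Qed.

(** * Artin-Wraith glued spaces *)

Section GlueTopology.
Context (X W : topologicalType) (f : admissible X W).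
Local Notation K := (glue f).

Definition glue_set (A : set X) (B : set W) : set K :=
  fun p => match p with inl x => A x | inr w => B w end.

Lemma glue_setE (D : set K) :
  D = glue_set (@inl X W @^-1` D) (@inr X W @^-1` D).
Proof. by apply/funext => -[x|w]. Qed.

Lemma setC_glue_set A B : ~` glue_set A B = glue_set (~` A) (~` B).
Proof. by apply/funext => -[x|w]. Qed.

Lemma closed_glueP (D : set K) : closed D <-> glue_closed f D.
Proof. by rewrite -openC glue_openE /glue_open setCK. Qed.

Lemma closed_glue_setP A B :
  closed (glue_set A B) <-> [/\ closed A, closed B & f A `<=` B].
Proof. exact: closed_glueP. Qed.

Lemma open_glue_setP U V :
  open (glue_set U V) <-> [/\ open U, open V & f (~` U) `<=` ~` V].
Proof.
rewrite glue_openE /glue_open setC_glue_set.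
by split => -[cU cV fUV]; split => //; rewrite ?closedC // -closedC.
Qed.

Lemma open_preimage_inl (D : set K) : open D -> open (@inl X W @^-1` D).
Proof. by rewrite {1}(glue_setE D) => /open_glue_setP []. Qed.

Lemma open_preimage_inr (D : set K) : open D -> open (@inr X W @^-1` D).
Proof. by rewrite {1}(glue_setE D) => /open_glue_setP []. Qed.

Lemma closed_preimage_inr (D : set K) : closed D -> closed (@inr X W @^-1` D).
Proof. by case/closed_glueP. Qed.

Lemma open_glue_inl (U : set X) : open U -> open (glue_set U set0).
Proof. by move=> oU; apply/open_glue_setP; split => //; [exact: open0|move=> ? _ []]. Qed.

Lemma ginl_continuous : continuous (ginl f).
Proof.
by apply/continuousP => A; exact: open_preimage_inl.
Qed.

Lemma compact_glue_inl (C : set X) : compact C -> compact (glue_set C set0).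
Proof.
move=> cC; have -> : glue_set C set0 = ginl f @` C.
  apply/seteqP; split; first by move=> [x|w] //= Cx; exists x.
  by move=> p [x Cx <-].
apply: continuous_compact cC; apply: continuous_subspaceT => x.
exact: ginl_continuous.
Qed.

Lemma nbhs_glue_inl (x : X) (N : set X) :
  nbhs x N -> nbhs (inl x : K) (glue_set N set0).
Proof.
rewrite !nbhsE => -[B [oB Bx] BN]; exists (glue_set B set0).
  by split => //; exact: open_glue_inl.
by move=> [y|w] //= /BN.
Qed.

Lemma closure_glue_inl (F : set X) : closed F ->
  closure (glue_set F set0) = glue_set F (f F).
Proof.
move=> cF; apply/seteqP; split.
  apply: closure_sub_closed; last by move=> [x|w].
  by apply/closed_glue_setP; split => //; exact: amap_closed.
move=> [x|w] /= h; first exact: subset_closure.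
have /closed_glueP [cl _ fcl] := @closed_closure _ (glue_set F set0).
apply: fcl; apply: (amap_mono cF cl) h => x Fx.
exact: subset_closure.
Qed.

Lemma range_ginl : range (ginl f) = glue_set setT set0.
Proof.
apply/seteqP; split; first by move=> _ [x _ <-].
by move=> [x|w] //= _; exists x.
Qed.

Lemma amap_compact (hK : hausdorff_space K) (C : set X) :
  compact C -> f C = set0.
Proof.
move=> cC; have cpt := compact_glue_inl cC.
have /closed_glue_setP [clC _ _] := compact_closed hK cpt.
apply/seteqP; split => // w fCw.
have : closure (glue_set C set0) (inr w) by rewrite closure_glue_inl.
by move/(compact_closed hK cpt).
Qed.

Lemma compact_of_glue_inl (C : set X) : compact (glue_set C set0) -> compact C.
Proof.
move=> cpt F PF FC.
have [[x|w] [] //= Cx clx] := cpt _ (fmap_proper_filter inl PF) FC.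
exists x; split => // A B FA nB.
have [[y|w] [] //= Ay By] :=
  clx (glue_set A setT) (glue_set B set0) FA (nbhs_glue_inl nB).
by exists y.
Qed.

Lemma compact_amap0 (cK : compact [set: K]) (A : set X) :
  closed A -> f A = set0 -> compact A.
Proof.
move=> cA fA; apply: compact_of_glue_inl; apply: (subclosed_compact _ cK) => //.
by apply/closed_glue_setP; split => //; [exact: closed0|rewrite fA].
Qed.

End GlueTopology.
Arguments glue_set {X W} f A B.

Lemma nbhs_setX (T U : topologicalType) (a : T) (b : U) A B :
  nbhs a A -> nbhs b B -> nbhs (a, b) (A `*` B).
Proof. by move=> nA nB; exists (A, B). Qed.

Definition persp (X W : topologicalType) (f : admissible X W) (e : set (X * X)) :=
  closure ((fun p : X * X => (ginl f p.1, ginl f p.2)) @` e)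
    `&` ~` range (fun p : X * X => (ginl f p.1, ginl f p.2))
  `<=` range (fun w : W => (ginr f w, ginr f w)).

Lemma perspectiveE (X : topologicalType) (o : compObj X) e :
  perspective o e = persp (cf o) e.
Proof. by []. Qed.

(* For [w] in [f F], a cluster point [p] of the [e]-partners in [A] of points
   of [F] close to [w] makes [(inr w, p)] a boundary point of the closure of
   [e], so [p = inr w] by perspectivity, while [p] lies in the closure of [A]. *)
Lemma persp_amap_sub (X W : topologicalType) (f : admissible X W)
    (cK : compact [set: glue f]) (e : set (X * X)) (pe : persp f e)
    (A F : set X) : closed A -> closed F ->
  (forall x, F x -> exists a, A a /\ e (x, a)) -> f F `<=` f A.
Proof.
move=> cA cF hFA w fFw.
pose D (V : set (glue f)) : set (glue f) :=
  [set q | exists x a, [/\ F x, A a, e (x, a), V (inl x) & q = inl a]].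
pose G := filter_from (nbhs (inr w : glue f)) D.
have FG : Filter G.
  apply: filter_from_filter; first by exists setT; exact: filterT.
  move=> V1 V2 n1 n2; exists (V1 `&` V2); first exact: filterI.
  by move=> q [x [a [Fx Aa ex [V1x V2x] ->]]]; split; exists x, a.
have PG : ProperFilter G.
  apply: filter_from_proper => V nV.
  have : closure (glue_set f F set0) (inr w) by rewrite closure_glue_inl.
  move/(_ V nV) => [[x|w'] [] //= Fx Vx].
  by have [a [Aa ex]] := hFA x Fx; exists (inl a), x, a.
have [p [_ clp]] := cK G PG (ex_intro2 _ _ setT filterT (fun _ _ => I)).
have clAp : closure (glue_set f A set0) p.
  move=> N nN.
  have GD : G (D setT) by exists setT => //; exact: filterT.
  have [_ [[x [a [Fx Aa ex _ ->]]] Nq]] := clp (D setT) N GD nN.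
  by exists (inl a).
have cle : closure ((fun p : X * X => (ginl f p.1, ginl f p.2)) @` e) (inr w, p).
  move=> M [[V U] /= [nV nU] sub].
  have [_ [[x [a [Fx Aa ex Vx ->]]] Uq]] := clp (D V) U (ex_intro2 _ _ V nV (fun _ h => h)) nU.
  by exists (inl x, inl a); split; [exists (x, a)|apply: sub].
have notXX : ~ range (fun p : X * X => (ginl f p.1, ginl f p.2)) (inr w, p).
  by move=> [[x1 x2] _ []].
have [w0 _ [[->] pE]] := pe _ (conj cle notXX).
by move: clAp; rewrite -pE closure_glue_inl.
Qed.

(** * Proper coarse structures *)

Section CoarseStructure.
Context (T : topologicalType) (E : set (set (T * T))).
Hypotheses (Ep : proper_coarse E) (Ec : coarsely_connected E).

Let cs : coarse_structure E. Proof. by case: Ep. Qed.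

Lemma coarse_diag : E (diagonal T). Proof. by case: cs. Qed.
Lemma coarse_sub e e' : E e -> e' `<=` e -> E e'.
Proof. by case: cs => _ h _ _ _; exact: h. Qed.
Lemma coarse_setU e e' : E e -> E e' -> E (e `|` e').
Proof. by case: cs => _ _ h _ _; exact: h. Qed.
Lemma coarse_inv e : E e -> E (rel_inv e).
Proof. by case: cs => _ _ _ h _; exact: h. Qed.
Lemma coarse_comp e e' : E e -> E e' -> E (rel_comp e e').
Proof. by case: cs => _ _ _ _ h; exact: h. Qed.

Lemma bounded_set0 : bounded_for E set0.
Proof. by apply: coarse_sub coarse_diag _ => -[a b] [[]]. Qed.

Lemma bounded_sub A B : A `<=` B -> bounded_for E B -> bounded_for E A.
Proof. by move=> AB EB; apply: coarse_sub EB _ => -[a b] [/= /AB ? /AB ?]. Qed.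

Lemma bounded_setU A B :
  bounded_for E A -> bounded_for E B -> bounded_for E (A `|` B).
Proof.
move=> bA bB.
have [[a Aa]|nA] := pselect (A !=set0); last first.
  by apply: bounded_sub bB => x [Ax|//]; case: nA; exists x.
have [[b Bb]|nB] := pselect (B !=set0); last first.
  by apply: bounded_sub bA => x [//|Bx]; case: nB; exists x.
pose c := rel_comp (rel_comp (A `*` A) [set (a, b)]) (B `*` B).
have Ec' : E c by apply: coarse_comp => //; apply: coarse_comp => //; exact: Ec.
apply: (coarse_sub (coarse_setU (coarse_setU bA bB)
  (coarse_setU Ec' (coarse_inv Ec')))).
move=> -[x y] [/= [Ax|Bx] [Ay|By]].
- by left; left.
- by right; left; exists b; split => //; exists a.
- by right; right; exists b; split => //; exists a.
- by left; right.
Qed.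

Lemma controlled_nbhs_square :
  exists2 N, E N & forall x : T, exists V, nbhs x V /\ V `*` V `<=` N.
Proof.
case: Ep => _ [N [EN [U [oU dU UN]]]] _; exists N => // x.
have : nbhs (x, x) U by apply: open_nbhs_nbhs; split => //; exact: dU.
move=> [[V1 V2] /= [n1 n2] sub]; exists (V1 `&` V2); split; first exact: filterI.
by move=> [a b] [/= [? _] [_ ?]]; apply/UN/sub.
Qed.

Lemma compact_bounded C : compact C -> bounded_for E C.
Proof.
move=> cC; apply: (compact_local cC bounded_set0 bounded_setU bounded_sub).
have [N EN hN] := controlled_nbhs_square => x _.
by have [V [nV VN]] := hN x; exists V; split => //; exact: coarse_sub VN.
Qed.

Lemma closure_controlled (S : set T) : exists2 N, E N &
  forall x, closure S x -> exists s, S s /\ N (x, s).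
Proof.
have [N EN hN] := controlled_nbhs_square; exists N => // x clx.
have [V [nV VN]] := hN x; have [s [Ss Vs]] := clx V nV.
by exists s; split => //; apply: VN; split => //; exact: nbhs_singleton.
Qed.

Lemma bounded_closure_compact B : bounded_for E B -> compact (closure B).
Proof. by case: Ep => _ _; apply. Qed.

Lemma bounded_controlled_image e C : E e -> compact C ->
  bounded_for E [set y | exists2 x, C x & e (x, y)].
Proof.
move=> Ee cC; apply: (coarse_sub (coarse_comp
  (coarse_comp (coarse_inv Ee) (compact_bounded cC)) Ee)).
by move=> [a b] [/= [a0 Ca0 ea] [b0 Cb0 eb]]; exists b0; split => //; exists a0.
Qed.

End CoarseStructure.

Lemma amap_closure_sub (X W : topologicalType) (eps : set (set (X * X)))
    (eps_p : proper_coarse eps) (f : admissible X W) (cK : compact [set: glue f])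
    (pK : forall e, eps e -> persp f e) (rho : set (X * X)) (A S : set X) :
  eps rho -> closed A ->
  (forall s, S s -> exists a, A a /\ rho (s, a)) -> f (closure S) `<=` f A.
Proof.
move=> Erho cA h; have [N EN hN] := closure_controlled eps_p S.
apply: (persp_amap_sub cK (pK _ (coarse_comp eps_p EN Erho)) cA (@closed_closure _ _)).
move=> x /hN [s [Ss Nxs]]; have [a [Aa ra]] := h s Ss.
by exists a; split => //; exists s.
Qed.

Lemma coarse_map_bounded (S T : Type) (ES : set (set (S * S)))
    (ET : set (set (T * T))) (h : S -> T) :
  coarse_map ES ET h -> forall B, bounded_for ES B -> bounded_for ET (h @` B).
Proof.
move=> [hc _] B /hc; congr ET; apply/seteqP; split.
  by move=> [x y] [[a b] [/= Ba Bb] [<- <-]]; split; [exists a|exists b].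
by move=> [x y] [[a Ba ea] [b Bb eb]]; exists (a, b) => //=; rewrite ea eb.
Qed.

(** * Metrization of compact spaces *)

Section RealFacts.
Local Open Scope ring_scope.
Local Notation R := Rdefinitions.R.

Lemma exists_invS_lt (e : R) : 0 < e -> exists N : nat, N.+1%:R^-1 < e.
Proof.
move=> e0; have [N _ hN] := near_infty_natSinv_lt (PosNum e0).
by exists N; exact: (hN N (leqnn N)).
Qed.

Lemma continuous_nbhs_lt (T : topologicalType) (h : T -> R) :
  continuous h -> forall y (r : R), 0 < r -> nbhs y [set z | `|h y - h z| < r].
Proof. by move=> ch y r r0; exact: ch y _ (nbhsx_ballx (h y) r r0). Qed.

End RealFacts.

Section SeparatingFamily.
Local Open Scope ring_scope.
Local Notation R := Rdefinitions.R.
Context (K : topologicalType) (cK : compact [set: K])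
  (phi : nat -> K -> R) (cphi : forall n, continuous (phi n))
  (bphi : forall n x, 0 <= phi n x <= 1)
  (sep : forall x y, x <> y -> exists n, phi n x != phi n y).

Definition sep_term n x y : R := `|phi n x - phi n y| / n.+1%:R.

(* The weights [1 / (n + 1)] make the tail of the supremum uniformly small, so
   up to any precision [sep_dist] involves only finitely many [phi n]. *)
Definition sep_dist (x y : K) : R := sup (range (fun n => sep_term n x y)).

Lemma sep_diff_le1 n x y : `|phi n x - phi n y| <= 1.
Proof.
have /andP [? ?] := bphi n x; have /andP [? ?] := bphi n y.
by rewrite ler_norml; apply/andP; split; lra.
Qed.

Lemma sep_term_ge0 n x y : 0 <= sep_term n x y.
Proof. by rewrite /sep_term divr_ge0. Qed.

Lemma sep_term_gt0 n x y : phi n x != phi n y -> 0 < sep_term n x y.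
Proof. by move=> hn; rewrite /sep_term divr_gt0 ?ltr0Sn // normr_gt0 subr_eq0. Qed.

Lemma sep_term_le_diff n x y : sep_term n x y <= `|phi n x - phi n y|.
Proof.
by rewrite /sep_term ler_pdivrMr ?ltr0Sn // -{1}(mulr1 `|_|) ler_wpM2l // ler1n.
Qed.

Lemma sep_term_le_inv n x y : sep_term n x y <= n.+1%:R^-1.
Proof.
rewrite /sep_term -[leRHS]mul1r; apply: ler_wpM2r; first by rewrite invr_ge0.
exact: sep_diff_le1.
Qed.

Lemma has_sup_sep_term x y : has_sup (range (fun n => sep_term n x y)).
Proof.
split; first by exists (sep_term 0 x y), 0%N.
exists 1 => _ [n _ <-]; apply: le_trans (sep_term_le_diff _ _ _) _.
exact: sep_diff_le1.
Qed.

Lemma sep_term_le_dist n x y : sep_term n x y <= sep_dist x y.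
Proof. by apply: sup_upper_bound (has_sup_sep_term x y) _ _; exists n. Qed.

Lemma sep_dist_le x y c : (forall n, sep_term n x y <= c) -> sep_dist x y <= c.
Proof.
move=> h; apply: ge_sup; first by exists (sep_term 0 x y), 0%N.
by move=> _ [n _ <-]; exact: h.
Qed.

Lemma sep_dist_eq0 x y : sep_dist x y = 0 <-> x = y.
Proof.
split => [d0|->]; last first.
  apply/eqP; rewrite eq_le (le_trans (sep_term_ge0 0 y y) (sep_term_le_dist 0 y y)).
  by rewrite andbT; apply: sep_dist_le => n; rewrite /sep_term subrr normr0 mul0r.
apply: contrapT => /sep [n /sep_term_gt0 t0].
by have := lt_le_trans t0 (sep_term_le_dist n x y); rewrite d0 ltxx.
Qed.

Lemma sep_distC x y : sep_dist x y = sep_dist y x.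
Proof.
by rewrite /sep_dist (_ : (fun n => _) = (fun n => sep_term n y x)) //;
  apply/funext => n; rewrite /sep_term distrC.
Qed.

Lemma sep_dist_triangle x y z : sep_dist x z <= sep_dist x y + sep_dist y z.
Proof.
apply: sep_dist_le => n.
apply: le_trans (lerD (sep_term_le_dist n x y) (sep_term_le_dist n y z)).
rewrite /sep_term -mulrDl; apply: ler_wpM2r; first by rewrite invr_ge0.
exact: ler_distD.
Qed.

Lemma nbhs_sep_dist x (e : R) : 0 < e -> nbhs x [set y | sep_dist x y < e].
Proof.
move=> e0; have e20 : 0 < e / 2 by rewrite divr_gt0.
have [N hN] := exists_invS_lt e20.
have near_phi := @filter_forall _ 'I_N (fun i => [set y | `|phi i x - phi i y| < e / 2])
  (nbhs x) (nbhs_filter x) (fun i => @continuous_nbhs_lt _ (phi i) (@cphi i) x _ e20).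
apply: filterS near_phi => y hy; apply: (@le_lt_trans _ _ (e / 2)); last by lra.
apply: sep_dist_le => n; case: (ltnP n N) => [nN|Nn].
  exact/ltW/(le_lt_trans (sep_term_le_diff n x y) (hy (Ordinal nN))).
apply: le_trans (sep_term_le_inv n x y) _; apply/ltW/(le_lt_trans _ hN).
by rewrite lef_pV2 ?posrE ?ltr0Sn // ler_nat.
Qed.

Lemma sep_dist_bounded_away (C : set K) x : compact C -> ~ C x ->
  exists2 r : R, 0 < r & forall y, C y -> r <= sep_dist x y.
Proof.
move=> cC nCx.
apply: (compact_local
  (P := fun S => exists2 r : R, 0 < r & forall y, S y -> r <= sep_dist x y) cC).
- by exists 1 => // y [].
- move=> S1 S2 [r1 r10 h1] [r2 r20 h2]; exists (Num.min r1 r2).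
    by rewrite lt_min r10 r20.
  by move=> y [/h1|/h2] h; rewrite ge_min h ?orbT.
- by move=> S1 S2 S12 [r r0 h]; exists r => // y /S12 /h.
move=> y Cy; have [n hn] := sep (fun xy : x = y => nCx (eq_ind_r C Cy xy)).
pose r := sep_term n x y / 2.
have r0 : 0 < r by rewrite divr_gt0 ?sep_term_gt0.
exists [set z | `|phi n y - phi n z| < r * n.+1%:R]; split.
  exact: continuous_nbhs_lt (@cphi n) y _ (mulr_gt0 r0 (ltr0Sn _ n)).
exists r => // z hz; apply: le_trans (sep_term_le_dist n x z).
rewrite /sep_term ler_pdivlMr ?ltr0Sn //.
have := ler_distD (phi n z) (phi n x) (phi n y).
rewrite (distrC (phi n z) (phi n y)).
have -> : `|phi n x - phi n y| = 2 * (r * n.+1%:R).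
  by rewrite /r /sep_term; field; rewrite addrC natr1 pnatr_eq0.
by move: hz => /=; lra.
Qed.

Lemma metrizable_of_sep : metrizable K.
Proof.
exists sep_dist; split.
- exact: sep_dist_eq0.
- exact: sep_distC.
- exact: sep_dist_triangle.
move=> A; split => [oA x Ax|h].
  have cA : compact (~` A) by apply: (subclosed_compact _ cK) => //; exact: open_closedC.
  have [r r0 hr] := sep_dist_bounded_away cA (fun nA => nA Ax).
  exists r; split => // y dy; apply: contrapT => nAy.
  by have := hr y nAy; rewrite leNgt dy.
rewrite openE => x Ax; have [e [e0 he]] := h x Ax.
exact: filterS he (nbhs_sep_dist x e0).
Qed.

End SeparatingFamily.

Lemma metrizable_of_countable_sep (K : topologicalType) (I : countType)
    (cK : compact [set: K]) (phi : I -> K -> Rdefinitions.R)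
    (cphi : forall i, continuous (phi i))
    (bphi : forall i x, (0 <= phi i x <= 1)%R)
    (sep : forall x y, x <> y -> exists i, phi i x != phi i y) :
  metrizable K.
Proof.
pose psi (n : nat) : K -> Rdefinitions.R :=
  if (unpickle n : option I) is Some i then phi i else fun _ => 0%R.
apply: (@metrizable_of_sep K cK psi).
- move=> n; rewrite /psi; case: (unpickle n) => [i|]; first exact: cphi.
  exact: cst_continuous.
- by move=> n x; rewrite /psi; case: (unpickle n) => [i|] //; rewrite lexx ler01.
by move=> x y /sep [i hi]; exists (pickle i); rewrite /psi pickleK.
Qed.

Section MetricFacts.
Local Open Scope ring_scope.
Local Notation R := Rdefinitions.R.
Context (T : topologicalType) (d : T -> T -> R)
  (d0 : forall x y, d x y = 0 <-> x = y) (dsym : forall x y, d x y = d y x)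
  (dtri : forall x y z, d x z <= d x y + d y z)
  (dop : forall A : set T, open A <->
      (forall x, A x -> exists e : R, 0 < e /\ [set y | d x y < e] `<=` A)).

Lemma metric_ge0 x y : 0 <= d x y.
Proof.
have := dtri x y x; rewrite (d0 x x).2 // (dsym y x) => h.
by rewrite -(pmulrn_lge0 _ (ltn0Sn 1)) mulr2n.
Qed.

Lemma open_metric_lt c r : open [set p | d c p < r].
Proof.
apply/dop => p hp; exists (r - d c p); split; first by rewrite subr_gt0.
by move=> q /= hq; have := dtri c p q; lra.
Qed.

Lemma open_metric_gt c r : open [set p | r < d c p].
Proof.
apply/dop => p hp; exists (d c p - r); split; first by rewrite subr_gt0.
by move=> q /= hq; have := dtri c q p; rewrite (dsym q p); lra.
Qed.

Lemma closed_metric_le c r : closed [set p | d c p <= r].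
Proof.
rewrite (_ : [set p | _] = ~` [set p | r < d c p]); first exact/open_closedC/open_metric_gt.
by apply/funext => p /=; rewrite propeqE leNgt; split => /negP.
Qed.

Lemma closed_metric_ge c r : closed [set p | r <= d c p].
Proof.
rewrite (_ : [set p | _] = ~` [set p | d c p < r]); first exact/open_closedC/open_metric_lt.
by apply/funext => p /=; rewrite propeqE leNgt; split => /negP.
Qed.

Lemma compact_finite_net (C : set T) (r : R) : compact C -> 0 < r ->
  exists s : seq T, forall x, C x -> exists2 v, v \in s & d x v < r.
Proof.
move=> cC r0; apply: (compact_local
  (P := fun S => exists s : seq T, forall x, S x -> exists2 v, v \in s & d x v < r) cC).
- by exists [::].
- move=> S1 S2 [s1 h1] [s2 h2]; exists (s1 ++ s2) => x [/h1|/h2] [v vs dv];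
    by exists v => //; rewrite mem_cat vs ?orbT.
- by move=> S1 S2 S12 [s h]; exists s => x /S12 /h.
move=> x _; exists [set p | d x p < r]; split.
  by apply: open_nbhs_nbhs; split; [exact: open_metric_lt|rewrite /= (d0 x x).2].
by exists [:: x] => y hy; exists x; [rewrite mem_seq1|rewrite dsym].
Qed.

End MetricFacts.

Lemma second_countable_nat_base (T : topologicalType) : @second_countable T ->
  exists B : nat -> set T, (forall n, open (B n)) /\
    forall x N, nbhs x N -> exists2 n, B n x & B n `<=` N.
Proof.
case=> BT /countable_injP [c cinj] [BTo BTb].
pose B n := if pselect (exists b, BT b /\ c b = n) is left h
  then projT1 (boolp.cid h) else set0.
have BE b : BT b -> B (c b) = b.
  move=> Bb; rewrite /B; case: pselect => [h|nh]; last by case: nh; exists b.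
  by case: (boolp.cid h) => b' [Bb' cb'] /=; apply: cinj => //; exact: mem_set.
exists B; split => [n|x N nN].
  rewrite /B; case: pselect => [h|_]; last exact: open0.
  by case: (boolp.cid h) => b [Bb cb]; exact: BTo.
have [b [Bb bx] bN] := BTb x _ nN.
by exists (c b); rewrite BE.
Qed.

Section UrysohnCompact.
Local Notation R := Rdefinitions.R.
Context (T : topologicalType) (cT : compact [set: T]) (hT : hausdorff_space T).

Lemma Urysohn_sep (A B : set T) : closed A -> closed B -> A `&` B = set0 ->
  (forall x, A x -> @Urysohn T R A B x = 0%R) /\
  (forall x, B x -> @Urysohn T R A B x = 1%R).
Proof.
move=> cA cB AB.
have us := normal_uniform_separator (compact_normal hT cT) cA cB AB.
by split => x hx; [apply: (Urysohn_sub0 us) | apply: (Urysohn_sub1 us)]; exists x.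
Qed.

End UrysohnCompact.

Lemma Urysohn_01 (T : topologicalType) (A B : set T) x :
  (0 <= @Urysohn T Rdefinitions.R A B x <= 1)%R.
Proof.
have : range (@Urysohn T Rdefinitions.R A B) (Urysohn A B x) by exists x.
by move/(@Urysohn_range T Rdefinitions.R A B); rewrite /= in_itv.
Qed.

(** * Objects and morphisms of MPers *)

Lemma admissible_ext (X W : topologicalType) (f1 f2 : admissible X W) :
  (forall F, f1 F = f2 F) -> f1 = f2.
Proof.
case: f1 f2 => a1 c1 j1 z1 u1 [a2 c2 j2 z2 u2] /= e.
have ea : a1 = a2 by apply/funext.
by subst a2; congr Admissible; apply: Prop_irrelevance.
Qed.

Lemma MPers_ob_eq (X : topologicalType) (E : set (set (X * X))) (W : topologicalType)
    (f1 f2 : admissible X W) p1 p2 p3 p1' p2' p3' h1 h2 :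
  (forall F, f1 F = f2 F) ->
  exist _ (@CompObj X W f1 p1 p2 p3) h1 = exist _ (@CompObj X W f2 p1' p2' p3') h2
    :> Ob (MPers E).
Proof.
move=> /admissible_ext ef; subst f2; apply: eq_exist.
by congr CompObj; apply: Prop_irrelevance.
Qed.

Lemma compHom_ext (X : topologicalType) (a b : compObj X) (h1 h2 : compHom a b) :
  proj1_sig h1 =1 proj1_sig h2 -> h1 = h2.
Proof. by case: h1 h2 => [h1 p1] [h2 p2] /= e; apply: eq_exist; apply/funext. Qed.

(* Morphisms between different (but propositionally equal) objects are compared
   through their underlying maps tagged with the two boundaries, which makes
   them immune to [castHom]. *)
Definition hom_graph (X : topologicalType) (E : set (set (X * X))) (a b : Ob (MPers E))
  (h : Hom (MPers E) a b) :
  {p : topologicalType * topologicalType & (X + p.1 -> X + p.2)%type} :=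
  existT (fun p : topologicalType * topologicalType => (X + p.1 -> X + p.2)%type)
    (cW (proj1_sig a), cW (proj1_sig b)) (proj1_sig h).

Lemma hom_graph_cast (X : topologicalType) (E : set (set (X * X)))
    (a a' b b' : Ob (MPers E)) (ea : a = a') (eb : b = b') (h : Hom (MPers E) a b) :
  hom_graph (castHom ea eb h) = hom_graph h.
Proof. by case: a' / ea; case: b' / eb. Qed.

Lemma hom_graph_inj (X : topologicalType) (E : set (set (X * X))) (a b : Ob (MPers E))
  (h1 h2 : Hom (MPers E) a b) : hom_graph h1 = hom_graph h2 -> h1 = h2.
Proof.
case: h1 h2 => [h1 p1] [h2 p2] e; apply: eq_exist.
exact: Eqdep.EqdepTheory.inj_pair2 e.
Qed.

(* If [h (inr w) = inl x], pull back [inl @` C°] for a compact neighbourhood [C]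
   of [x]: as [h] fixes the dense set [X], [inr w] lies in the closure of
   [inl @` C], which is [inl @` C] itself because [f C] is empty. *)
Lemma compHom_boundary (X : topologicalType) (X_lc : locally_compact [set: X])
    (a b : compObj X) (hKa : hausdorff_space (glue (cf a)))
    (dKa : closure (range (ginl (cf a))) = setT) (h : compHom a b) (w : cW a) :
  exists w', proj1_sig h (inr w) = inr w'.
Proof.
case: h => h [ch hinl] /=.
case E: (h (inr w)) => [x|w']; last by exists w'.
exfalso; have [C [nC cC clC]] := locally_compact_nbhs X_lc x.
have oO : open (glue_set (cf b) C° set0) by exact/open_glue_inl/open_interior.
have oP : open (h @^-1` glue_set (cf b) C° set0) := (continuousP h).1 ch _ oO.
have Pw : (h @^-1` glue_set (cf b) C° set0) (inr w).
  by rewrite /= E; exact: nbhs_singleton (nbhs_interior nC).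
have clw : closure (glue_set (cf a) C set0) (inr w).
  move=> N nN.
  have nPN : nbhs (inr w : glue (cf a)) (h @^-1` glue_set (cf b) C° set0 `&` N).
    exact: filterI (open_nbhs_nbhs (conj oP Pw)) nN.
  have : closure (range (ginl (cf a))) (inr w) by rewrite dKa.
  move/(_ _ nPN) => [_ [[x' _ <-] [hx' Nx']]].
  by exists (inl x'); split => //; move: hx'; rewrite /= hinl => /interior_subset.
by move: clw; rewrite closure_glue_inl //= (amap_compact hKa cC).
Qed.

(** * Pulling a compactification back along a coarse map *)

Section Pullback.
Context (X Y : topologicalType) (eps : set (set (X * X))) (zeta : set (set (Y * Y))).
Hypotheses (X_lc : locally_compact [set: X]) (Y_lc : locally_compact [set: Y])
  (Y_haus : hausdorff_space Y) (Y_sc : @second_countable Y).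
Hypotheses (eps_p : proper_coarse eps) (eps_c : coarsely_connected eps)
  (zeta_p : proper_coarse zeta) (zeta_c : coarsely_connected zeta).
Variables (pi : Y -> X) (pi' : X -> Y).
Hypotheses (pi_c : coarse_map zeta eps pi) (pi_pi' : close_maps eps (pi \o pi') id).

Section PullbackObject.
Context (W : topologicalType) (f : admissible X W).

Definition pull_amap (F : set Y) : set W :=
  if pselect (closed F) then f (closure (pi @` F)) else set0.

Lemma pull_amapE F : closed F -> pull_amap F = f (closure (pi @` F)).
Proof. by rewrite /pull_amap; case: pselect. Qed.

Lemma pull_amap_closed F : closed F -> closed (pull_amap F).
Proof. by move=> cF; rewrite pull_amapE //; apply: amap_closed; exact: closed_closure. Qed.

Lemma pull_amap_junk F : ~ closed F -> pull_amap F = set0.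
Proof. by rewrite /pull_amap; case: pselect. Qed.

Lemma pull_amap0 : pull_amap set0 = set0.
Proof. by rewrite pull_amapE ?image_set0 ?closure0 ?amap0 //; exact: closed0. Qed.

Lemma pull_amapU F1 F2 : closed F1 -> closed F2 ->
  pull_amap (F1 `|` F2) = pull_amap F1 `|` pull_amap F2.
Proof.
move=> c1 c2; rewrite !pull_amapE //; last exact: closedU.
by rewrite image_setU closureU amapU //; exact: closed_closure.
Qed.

Definition pull : admissible Y W :=
  Admissible pull_amap_closed pull_amap_junk pull_amap0 pull_amapU.

Lemma pullE F : closed F -> pull F = f (closure (pi @` F)).
Proof. exact: pull_amapE. Qed.

Hypotheses (cW : compact [set: W]) (cK : compact [set: glue f])
  (hK : hausdorff_space (glue f)) (dK : closure (range (ginl f)) = setT)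
  (pK : forall e, eps e -> persp f e).

Lemma pull_compact C : compact C -> pull C = set0.
Proof.
move=> cC; rewrite pullE; last exact: compact_closed.
apply: (amap_compact hK); apply: (bounded_closure_compact eps_p).
exact: (coarse_map_bounded pi_c (compact_bounded zeta_p zeta_c cC)).
Qed.

Lemma compact_pull_eq0 F : closed F -> pull F = set0 -> compact F.
Proof.
move=> cF; rewrite pullE // => h.
have cc : compact (closure (pi @` F)) by exact: compact_amap0 (@closed_closure _ _) h.
have bF : bounded_for zeta F.
  apply: (@bounded_sub _ _ zeta_p _ (pi @^-1` closure (pi @` F))).
    by move=> y Fy; apply: subset_closure; exists y.
  by apply: pi_c.2; exact: (compact_bounded eps_p eps_c cc).
by rewrite [F](closure_id F).1 //; exact: (bounded_closure_compact zeta_p bF).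
Qed.

Lemma open_glue_pull_lift (Q : set (glue f)) : open Q ->
  exists2 U : set Y, U `<=` pi @^-1` (@inl X W @^-1` Q) &
    open (glue_set pull U (@inr X W @^-1` Q)).
Proof.
move=> oQ; pose A := ~` (@inl X W @^-1` Q).
have cA : closed A by apply: open_closedC; exact: open_preimage_inl.
exists (~` closure (pi @^-1` A)).
  by move=> y nFy; apply: contrapT => nO; apply/nFy/subset_closure.
apply/open_glue_setP; split.
- exact/closed_openC/closed_closure.
- exact: open_preimage_inr.
rewrite setCK pullE; last exact: closed_closure.
have [N EN hN] := closure_controlled zeta_p (pi @^-1` A).
apply: (@subset_trans _ (f A)).
  apply: (amap_closure_sub eps_p cK pK (pi_c.1 _ EN)) => // _ [y /hN [y0 [Ay0 Nyy0]] <-].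
  by exists (pi y0); split => //; exists (y, y0).
by move: oQ; rewrite {1}(glue_setE Q) => /open_glue_setP [].
Qed.

Lemma boundary_uncluster (G : set_system (glue pull)) : ProperFilter G ->
  (forall w, ~ cluster G (inr w : glue pull)) ->
  exists S (Q : set (glue pull)),
    [/\ G S, open Q, (forall w, Q (inr w)) & Q `&` S = set0].
Proof.
move=> PG ncl.
pose P (V : set W) := exists S (Q : set (glue pull)),
  [/\ G S, open Q, V `<=` @inr Y W @^-1` Q & Q `&` S = set0].
suff [S [U [GS oU WU US]]] : P [set: W].
  by exists S, U; split => // w; exact: WU.
apply: compact_local cW _ _ _ _.
- exists setT, set0; split => //; [exact: filterT|exact: open0|exact: set0I].
- move=> V1 V2 [S1 [Q1 [G1 o1 s1 e1]]] [S2 [Q2 [G2 o2 s2 e2]]].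
  exists (S1 `&` S2), (Q1 `|` Q2); split; [exact: filterI|exact: openU| |].
    by move=> w [h|h]; [left; exact: s1|right; exact: s2].
  apply/seteqP; split => // p [[Q1p|Q2p] [S1p S2p]].
  + by rewrite -e1.
  + by rewrite -e2.
- by move=> V1 V2 V12 [S [Q [GS oQ s e]]]; exists S, Q; split => //; exact: subset_trans s.
move=> w _.
have [S [N [GS nN SN]]] :
    exists S N, [/\ G S, nbhs (inr w : glue pull) N & S `&` N = set0].
  apply: contrapT => nSN; apply: (ncl w) => S N GS nN; apply: contrapT => hSN.
  by apply: nSN; exists S, N; split => //; apply/seteqP; split => // p Sp; apply: hSN; exists p.
rewrite nbhsE in nN; case: nN => Q [oQ Qw] QN.
exists (@inr Y W @^-1` Q); split.
  by apply: open_nbhs_nbhs; split => //; exact: open_preimage_inr.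
exists S, Q; split => //; apply/seteqP; split => // p [Qp Sp].
by rewrite -SN; split => //; exact: QN.
Qed.

Lemma compact_glue_pull : compact [set: glue pull].
Proof.
move=> G PG _.
have [[w clw]|nw] := pselect (exists w, cluster G (inr w : glue pull)).
  by exists (inr w).
have [S [Q [GS oQ WQ QS]]] := boundary_uncluster PG (fun w clw => nw (ex_intro _ w clw)).
have cC : closed (~` Q) by exact: open_closedC.
rewrite (glue_setE (~` Q)) in cC; have /closed_glue_setP [cF _ pullF] := cC.
have cptF : compact (@inl Y W @^-1` (~` Q)).
  apply: compact_pull_eq0 cF _; apply/seteqP; split => // w /pullF.
  by apply; exact: WQ.
have GF : G (glue_set pull (@inl Y W @^-1` (~` Q)) set0).
  apply: filterS GS => p Sp; have : ~ (Q `&` S) p by rewrite QS.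
  by case: p Sp => [y|w] Sp /= nQS; [move=> Qy|]; apply: nQS; split => //; exact: WQ.
by have [p [_ clp]] := compact_glue_inl cptF PG GF; exists p.
Qed.

Lemma pull_glue_sep_inl_inr y (w : W) : exists U V : set (glue pull),
  [/\ open U, open V, U (inl y), V (inr w) & U `&` V = set0].
Proof.
have [C [nC cC clC]] := locally_compact_nbhs Y_lc y.
exists (glue_set pull C° set0), (glue_set pull (~` C) setT); split => //.
- exact/open_glue_inl/open_interior.
- apply/open_glue_setP; split; [exact: closed_openC|exact: openT|].
  by rewrite setCK pull_compact.
- by apply/seteqP; split => // -[y'|w'] [] //= /interior_subset.
Qed.

Lemma hausdorff_glue_pull : hausdorff_space (glue pull).
Proof.
apply/hausdorff_openP => -[y1|w1] [y2|w2] pq.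
- have [U [V [oU oV Uy Vy UV]]] :=
    (hausdorff_openP _).1 Y_haus y1 y2 (fun e => pq (congr1 inl e)).
  exists (glue_set pull U set0), (glue_set pull V set0).
  split => //; try exact: open_glue_inl.
  apply/seteqP; split => // -[y|w] [] //= Uy' Vy'.
  by have : (U `&` V) y by []; rewrite UV.
- exact: pull_glue_sep_inl_inr.
- have [U [V [oU oV Uy Vw UV]]] := pull_glue_sep_inl_inr y2 w1.
  by exists V, U; split => //; rewrite setIC.
have nq : (inr w1 : glue f) <> inr w2 by move=> [e]; apply: pq; rewrite e.
have [N1 [N2 [N1o N2o N1w N2w N12]]] := (hausdorff_openP _).1 hK _ _ nq.
have [U1 U1s oU1] := open_glue_pull_lift N1o.
have [U2 U2s oU2] := open_glue_pull_lift N2o.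
exists (glue_set pull U1 (@inr X W @^-1` N1)), (glue_set pull U2 (@inr X W @^-1` N2)).
split => //; apply/seteqP; split => // -[y|w] [] /=.
- move=> /U1s h1 /U2s h2.
  by have : (N1 `&` N2) (inl (pi y)) by []; rewrite N12.
- by move=> h1 h2; have : (N1 `&` N2) (inr w) by []; rewrite N12.
Qed.

Lemma dense_glue_pull : closure (range (ginl pull)) = setT.
Proof.
rewrite range_ginl closure_glue_inl; last exact: closedT.
apply/seteqP; split => // -[y|w] _ //=; rewrite pull_amapE; last exact: closedT.
have fT : f setT w.
  have : closure (range (ginl f)) (inr w) by rewrite dK.
  by rewrite range_ginl closure_glue_inl //; exact: closedT.
apply: (persp_amap_sub cK (pK (coarse_inv eps_p pi_pi'))) fT.
- exact: closed_closure.
- exact: closedT.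
move=> x _; exists (pi (pi' x)); split; last by exists x.
by apply: subset_closure; exists (pi' x).
Qed.

Lemma pull_glue_far e : zeta e -> forall y (w : W),
  exists2 Ny : set (glue pull), nbhs (inl y : glue pull) Ny &
  exists2 Nw : set (glue pull), nbhs (inr w : glue pull) Nw &
    forall a b, e (a, b) \/ e (b, a) -> Ny (inl a) -> ~ Nw (inl b).
Proof.
move=> ze y w; have [C [nC cC _]] := locally_compact_nbhs Y_lc y.
pose B := [set b | exists2 a, C a & (e `|` rel_inv e) (a, b)].
have cB : compact (closure B) := bounded_closure_compact zeta_p
  (bounded_controlled_image zeta_p zeta_c (coarse_setU zeta_p ze (coarse_inv zeta_p ze)) cC).
exists (glue_set pull C set0); first exact: nbhs_glue_inl.
exists (~` glue_set pull (closure B) set0).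
  apply: open_nbhs_nbhs; split; last by [].
  apply/closed_openC/closed_glue_setP; split; [exact: closed_closure|exact: closed0|].
  by rewrite pull_compact.
by move=> a b eab Ca /=; apply; apply: subset_closure; exists a.
Qed.

Lemma pull_glue_boundary_diag e (w1 w2 : W) : zeta e ->
  closure ((fun p : Y * Y => (ginl pull p.1, ginl pull p.2)) @` e) (inr w1, inr w2) ->
  w1 = w2.
Proof.
move=> ze clp; apply: contrapT => w12.
pose e' := (fun p => (pi p.1, pi p.2)) @` e.
have ncl : ~ closure ((fun p : X * X => (ginl f p.1, ginl f p.2)) @` e') (inr w1, inr w2).
  move=> cl; have notXX : ~ range (fun p : X * X => (ginl f p.1, ginl f p.2)) (inr w1, inr w2).
    by move=> [[x1 x2] _ []].
  by have [w0 _ [[e1] [e2]]] := pK (pi_c.1 _ ze) (conj cl notXX); apply: w12; rewrite -e1 -e2.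
have [M nM Mdisj] : exists2 M, nbhs (inr w1 : glue f, inr w2 : glue f) M &
    ((fun p : X * X => (ginl f p.1, ginl f p.2)) @` e') `&` M = set0.
  apply: contrapT => hh; apply: ncl => M nM; apply/set0P/negP => /eqP h.
  by apply: hh; exists M.
case: nM => -[V1 V2] /= [n1 n2] sub.
rewrite nbhsE in n1 n2; case: n1 => Q1 [Q1o Q1w] Q1V; case: n2 => Q2 [Q2o Q2w] Q2V.
have [U1 U1s oU1] := open_glue_pull_lift Q1o.
have [U2 U2s oU2] := open_glue_pull_lift Q2o.
have := clp _ (nbhs_setX (@open_nbhs_nbhs _ (inr w1 : glue pull) _ (conj oU1 Q1w))
                         (@open_nbhs_nbhs _ (inr w2 : glue pull) _ (conj oU2 Q2w))).
case=> _ [[[a b] eab <-] [/= /U1s ha /U2s hb]].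
have : (((fun p : X * X => (ginl f p.1, ginl f p.2)) @` e') `&` M)
    (inl (pi a), inl (pi b)).
  split; first by exists (pi a, pi b) => //; exists (a, b).
  by apply: sub; split; [exact: Q1V|exact: Q2V].
by rewrite Mdisj.
Qed.

Lemma persp_pull e : zeta e -> persp pull e.
Proof.
move=> ze [p1 p2] [clp nYY].
case: p1 p2 clp nYY => [y1|w1] [y2|w2] clp nYY.
- by case: nYY; exists (y1, y2).
- have [Ny nNy [Nw nNw far]] := pull_glue_far ze y1 w2.
  have [_ [[[a b] eab <-] [/= Na Nb]]] := clp _ (nbhs_setX nNy nNw).
  by have := far a b (or_introl eab) Na.
- have [Ny nNy [Nw nNw far]] := pull_glue_far ze y2 w1.
  have [_ [[[a b] eab <-] [/= Na Nb]]] := clp _ (nbhs_setX nNw nNy).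
  by have := far b a (or_intror eab) Nb.
by exists w1 => //; rewrite (pull_glue_boundary_diag ze clp).
Qed.

Section Metrizability.
Local Open Scope ring_scope.
Local Notation R := Rdefinitions.R.

Section CountableBase.
Variable B : nat -> set Y.
Hypotheses (B_open : forall n, open (B n))
  (B_base : forall y N, nbhs y N -> exists2 n, B n y & B n `<=` N).

Definition pull_bump (n1 n2 : nat) : glue pull -> R :=
  Urysohn (glue_set pull (closure (B n1)) set0) (~` glue_set pull (B n2) set0).

Lemma pull_bump_sep y q : inl y <> q ->
  exists n1 n2, pull_bump n1 n2 (inl y) != pull_bump n1 n2 q.
Proof.
move=> yq; have [C [nC cC _]] := locally_compact_nbhs Y_lc y.
have [U [oU Uy nUq]] : exists U, [/\ open U, U y & ~ glue_set pull U set0 q].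
  case: q yq => [y'|w] yq; last by exists setT; split => //; exact: openT.
  have [U [V [oU oV Uy Vy' UV]]] :=
    (hausdorff_openP _).1 Y_haus y y' (fun e => yq (congr1 inl e)).
  by exists U; split => // /= Uy'; have : (U `&` V) y' by []; rewrite UV.
have [n2 B2y B2N] := B_base (filterI (nbhs_interior nC) (open_nbhs_nbhs (conj oU Uy))).
have [V nV clV] := compact_regular Y_haus cC nC (open_nbhs_nbhs (conj (B_open n2) B2y)).
have [n1 B1y B1V] := B_base nV; exists n1, n2.
have sub12 : closure (B n1) `<=` B n2 by apply: subset_trans clV; exact: closureS.
have cpt1 : compact (closure (B n1)).
  apply: (subclosed_compact _ cC); first exact: closed_closure.
  by move=> z /sub12 /B2N [/interior_subset].
have cA : closed (glue_set pull (closure (B n1)) set0).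
  apply/closed_glue_setP; split; [exact: closed_closure|exact: closed0|].
  by rewrite pull_compact.
have cB : closed (~` glue_set pull (B n2) set0).
  exact/open_closedC/open_glue_inl.
have AB : glue_set pull (closure (B n1)) set0 `&` ~` glue_set pull (B n2) set0 = set0.
  by apply/seteqP; split => // -[z|w] [] //= h1; apply; exact: sub12.
have [u0 u1] := Urysohn_sep compact_glue_pull hausdorff_glue_pull cA cB AB.
rewrite /pull_bump u0; last exact/subset_closure.
rewrite u1; first by rewrite eq_sym oner_eq0.
by case: q yq nUq {u0 u1} => [y'|w] //= _ nU B2y'; apply: nU; have [] := B2N _ B2y'.
Qed.

End CountableBase.

Section BoundaryNet.
Variable d : glue f -> glue f -> R.
Hypotheses (d0 : forall x y, d x y = 0 <-> x = y) (dsym : forall x y, d x y = d y x)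
  (dtri : forall x y z, d x z <= d x y + d y z)
  (dop : forall A : set (glue f), open A <->
      (forall x, A x -> exists e : R, 0 < e /\ [set y | d x y < e] `<=` A)).
Variable net : nat -> seq (glue f).
Hypothesis net_dense : forall m p, exists2 v, v \in net m & d p v < m.+1%:R^-1.

Definition pull_ring (v : glue f) (m : nat) : glue pull -> R :=
  Urysohn (glue_set pull set0 [set u | d v (inr u) <= m.+1%:R^-1])
          (glue_set pull set0 [set u | 2 * m.+1%:R^-1 <= d v (inr u)]).

Definition pull_ring_at (m k : nat) : glue pull -> R :=
  if onth (net m) k is Some v then pull_ring v m else fun _ => 0.

Lemma pull_ring_sep (w1 w2 : W) : w1 <> w2 ->
  exists m k, pull_ring_at m k (inr w1) != pull_ring_at m k (inr w2).
Proof.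
move=> w12; have dpos : 0 < d (inr w1) (inr w2).
  rewrite lt_neqAle (metric_ge0 d0 dsym dtri) andbT.
  by apply/eqP => /esym/d0 [].
have [m hm] := exists_invS_lt (divr_gt0 dpos (ltr0Sn _ 2)).
have [v /onthP [k hk] dv] := net_dense m (inr w1).
exists m, k; rewrite /pull_ring_at hk /pull_ring.
have r0 : 0 < m.+1%:R^-1 :> R by rewrite invr_gt0 ltr0Sn.
move: (m.+1%:R^-1) r0 hm dv => r r0 hm dv.
have cA : closed (glue_set pull set0 [set u | d v (inr u) <= r]).
  apply/closed_glue_setP; split; [exact: closed0| |by rewrite amap0; exact: sub0set].
  exact: (@closed_preimage_inr _ _ f _ (@closed_metric_le _ d dsym dtri dop v r)).
have cB : closed (glue_set pull set0 [set u | 2 * r <= d v (inr u)]).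
  apply/closed_glue_setP; split; [exact: closed0| |by rewrite amap0; exact: sub0set].
  exact: (@closed_preimage_inr _ _ f _ (@closed_metric_ge _ d dtri dop v (2 * r))).
have AB : glue_set pull set0 [set u | d v (inr u) <= r]
    `&` glue_set pull set0 [set u | 2 * r <= d v (inr u)] = set0.
  apply/seteqP; split => // -[z|u] [] //= h1 h2; exfalso.
  by move: h1 h2 r0; move: (d v (inr u)) => t; lra.
have [u0 u1] := Urysohn_sep compact_glue_pull hausdorff_glue_pull cA cB AB.
rewrite u0 ?u1.
- by rewrite eq_sym oner_eq0.
- by have := dtri (inr w1) v (inr w2); rewrite /=; lra.
- by rewrite /= dsym; exact: ltW.
Qed.

End BoundaryNet.

Lemma metrizable_glue_pull : @second_countable Y -> metrizable (glue f) ->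
  metrizable (glue pull).
Proof.
move=> /second_countable_nat_base [B [B_open B_base]] [d [d0 dsym dtri dop]].
have /choice [net net_dense] : forall m : nat, exists s : seq (glue f),
    forall p, exists2 v, v \in s & d p v < m.+1%:R^-1.
  move=> m; have r0 : 0 < m.+1%:R^-1 :> R by rewrite invr_gt0 ltr0Sn.
  by have [s hs] := compact_finite_net d0 dsym dtri dop cK r0; exists s => p; exact: hs.
pose phi (i : (nat * nat) + (nat * nat)) : glue pull -> R :=
  match i with
  | inl (n1, n2) => pull_bump B n1 n2
  | inr (m, k) => pull_ring_at d net m k
  end.
apply: (@metrizable_of_countable_sep _ _ compact_glue_pull phi).
- case=> [[n1 n2]|[m k]] /=; first exact: Urysohn_continuous.
  rewrite /pull_ring_at; case: onth => [v|]; first exact: Urysohn_continuous.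
  exact: cst_continuous.
- case=> [[n1 n2]|[m k]] x /=; first exact: Urysohn_01.
  rewrite /pull_ring_at; case: onth => [v|]; first exact: Urysohn_01.
  by rewrite lexx ler01.
case=> [y|w1] q pq.
  by have [n1 [n2 h]] := pull_bump_sep B_open B_base pq; exists (inl (n1, n2)).
case: q pq => [y|w2] pq.
  have [n1 [n2 h]] := pull_bump_sep B_open B_base (fun e => pq (esym e)).
  by exists (inl (n1, n2)); rewrite eq_sym.
have [m [k h]] := pull_ring_sep d0 dsym dtri dop net_dense (fun e => pq (congr1 inr e)).
by exists (inr (m, k)).
Qed.

End Metrizability.

End PullbackObject.

Definition pull_compObj (o : compObj X) : compObj Y :=
  @CompObj Y (cW o) (pull (cf o)) (@cW_compact _ o) (@cW_hausdorff _ o)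
    (compact_glue_pull (@cW_compact _ o) (@c_compact _ o)).

Lemma pull_MPers_obj o : MPers_obj eps o -> MPers_obj zeta (pull_compObj o).
Proof.
case=> [[hK dK] pK mK]; have cK := @c_compact _ o.
split; first split.
- by apply: hausdorff_glue_pull.
- by apply: dense_glue_pull.
- by move=> e ze; rewrite perspectiveE; apply: persp_pull.
- by apply: metrizable_glue_pull => //; exact: cW_compact.
Qed.

Definition pull_ob (a : Ob (MPers eps)) : Ob (MPers zeta) :=
  exist _ (pull_compObj (proj1_sig a)) (pull_MPers_obj (proj2_sig a)).

(* The [inl] branch never occurs (see [compHom_boundary]); [pi'] only supplies
   a value of the right type. *)
Definition pull_hom_fun (a b : compObj X) (h : compHom a b) :
  glue (pull (cf a)) -> glue (pull (cf b)) :=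
  fun p => match p with
  | inl y => inl y
  | inr w => match proj1_sig h (inr w) with inl x => inl (pi' x) | inr w' => inr w' end
  end.

Lemma pull_hom_continuous (a b : Ob (MPers eps)) (h : Hom (MPers eps) a b) :
  continuous (@pull_hom_fun (proj1_sig a) (proj1_sig b) h).
Proof.
case: a b h => [oa [[hKa dKa] pKa mKa]] [ob hb] h.
have hW := compHom_boundary X_lc hKa dKa h.
case: h hW => h [ch hinl] /= hW.
apply/continuousP => U oU.
rewrite (glue_setE U) in oU; have /open_glue_setP [oU1 oU2 pullU] := oU.
pose F := ~` (@inl Y (cW ob) @^-1` U).
have cF : closed F by exact: open_closedC.
pose Z := glue_set (cf ob) (closure (pi @` F)) (~` (@inr Y (cW ob) @^-1` U)).
have cZ : closed Z.
  apply/closed_glue_setP; split; [exact: closed_closure|exact: open_closedC|].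
  by rewrite -(pullE _ cF).
have cZh : closed (h @^-1` Z).
  by rewrite -openC; exact: (continuousP h).1 ch _ (closed_openC cZ).
rewrite (glue_setE (h @^-1` Z)) in cZh; have /closed_glue_setP [_ cV faV] := cZh.
have inlZ : @inl X (cW oa) @^-1` (h @^-1` Z) = closure (pi @` F).
  by apply/funext => x; rewrite /= hinl.
have VZ : ~` [set w | U (@pull_hom_fun oa ob (exist _ h (conj ch hinl)) (inr w))] =
    @inr X (cW oa) @^-1` (h @^-1` Z).
  by apply/funext => w /=; have [w' e] := hW w; rewrite /pull_hom_fun /= e.
rewrite (glue_setE (_ @^-1` U)); apply/open_glue_setP; split => //.
  by rewrite -closedC VZ.
by rewrite VZ (pullE _ cF) -inlZ.
Qed.

Definition pull_hom (a b : Ob (MPers eps)) (h : Hom (MPers eps) a b) :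
  Hom (MPers zeta) (pull_ob a) (pull_ob b) :=
  exist _ (@pull_hom_fun (proj1_sig a) (proj1_sig b) h)
    (conj (@pull_hom_continuous a b h) (fun y => erefl)).

Lemma pull_hom_id (a : Ob (MPers eps)) : pull_hom (cid a) = cid (pull_ob a).
Proof. by apply: compHom_ext => -[y|w]. Qed.

Lemma pull_hom_comp (a b c : Ob (MPers eps)) (g : Hom (MPers eps) b c)
    (h : Hom (MPers eps) a b) :
  pull_hom (ccomp g h) = ccomp (pull_hom g) (pull_hom h).
Proof.
apply: compHom_ext => -[y|w] //=.
have [[hKa dKa] _ _] := proj2_sig a; have [[hKb dKb] _ _] := proj2_sig b.
have [w1 e1] := compHom_boundary X_lc hKa dKa h w.
have [w2 e2] := compHom_boundary X_lc hKb dKb g w1.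
by rewrite /pull_hom_fun /= e1 e2.
Qed.

Definition pull_functor : functor (MPers eps) (MPers zeta) :=
  Functor pull_hom_id pull_hom_comp.

End Pullback.

(* [f] is blind, by perspectivity, to the controlled displacement [pi \o pi']. *)
Lemma pullK (X Y : topologicalType) (eps : set (set (X * X)))
    (zeta : set (set (Y * Y))) (eps_p : proper_coarse eps) (zeta_p : proper_coarse zeta)
    (pi : Y -> X) (pi' : X -> Y) (pi_c : coarse_map zeta eps pi)
    (pi_pi' : close_maps eps (pi \o pi') id)
    (W : topologicalType) (f : admissible X W) (cK : compact [set: glue f])
    (pK : forall e, eps e -> persp f e) (F : set X) :
  pull pi' (pull pi f) F = f F.
Proof.
have [cF|ncF] := pselect (closed F); last by rewrite !amap_junk.
rewrite (pullE _ _ cF) (pullE _ _ (@closed_closure _ _)).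
have [N EN hN] := closure_controlled zeta_p (pi' @` F).
apply/seteqP; split.
- pose rho := rel_comp ((fun p => (pi p.1, pi p.2)) @` N) (range (fun x => (pi (pi' x), x))).
  apply: (@amap_closure_sub _ _ _ eps_p _ cK pK rho) cF _.
    exact: (coarse_comp eps_p (pi_c.1 _ EN) pi_pi').
  move=> _ [y /hN [_ [[x Fx <-] Nyx]] <-]; exists x; split => //.
  by exists (pi (pi' x)); split; [exists (y, pi' x)|exists x].
- apply: (persp_amap_sub cK (pK _ (coarse_inv eps_p pi_pi')) (@closed_closure _ _) cF).
  move=> x Fx; exists (pi (pi' x)); split; last by exists x.
  by apply/subset_closure; exists (pi' x) => //; apply: subset_closure; exists x.
Qed.

Section PullbackEquivalence.
Context (X Y : topologicalType) (eps : set (set (X * X))) (zeta : set (set (Y * Y))).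
Hypotheses (X_lc : locally_compact [set: X]) (Y_lc : locally_compact [set: Y])
  (X_haus : hausdorff_space X) (Y_haus : hausdorff_space Y)
  (X_sc : @second_countable X) (Y_sc : @second_countable Y).
Hypotheses (eps_p : proper_coarse eps) (eps_c : coarsely_connected eps)
  (zeta_p : proper_coarse zeta) (zeta_c : coarsely_connected zeta).
Variables (pi : Y -> X) (pi' : X -> Y).
Hypotheses (pi_c : coarse_map zeta eps pi) (pi'_c : coarse_map eps zeta pi')
  (pi_pi' : close_maps eps (pi \o pi') id) (pi'_pi : close_maps zeta (pi' \o pi) id).

Let F := pull_functor X_lc Y_lc Y_haus Y_sc eps_p eps_c zeta_p zeta_c pi_c pi_pi'.
Let G := pull_functor Y_lc X_lc X_haus X_sc zeta_p zeta_c eps_p eps_c pi'_c pi'_pi.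

Lemma pull_functorK_ob a : F0 G (F0 F a) = a.
Proof.
case: a => -[W f p1 p2 p3] ho; have [_ pK _] := ho.
by apply: MPers_ob_eq => S; exact: (pullK eps_p zeta_p pi_c pi_pi' p3 pK S).
Qed.

Lemma pull_functorK_hom a b (ea : F0 G (F0 F a) = a) (eb : F0 G (F0 F b) = b)
    (h : Hom (MPers eps) a b) :
  castHom ea eb (F1 G (F1 F h)) = h.
Proof.
apply: hom_graph_inj; rewrite hom_graph_cast /hom_graph /=.
have [[hKa dKa] _ _] := proj2_sig a.
have := compHom_boundary X_lc hKa dKa h; case: h => h [ch hinl] /= hW.
congr (existT _ _ _); apply/funext => -[x|w] /=; first exact/esym/hinl.
by have [w' e] := hW w; rewrite /pull_hom_fun /= e.
Qed.

End PullbackEquivalence.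

Unset Implicit Arguments.
Theorem mainTheorem2 (X Y : topologicalType)
  (X_lc : locally_compact [set: X]) (X_pc : paracompact X)
  (X_haus : hausdorff_space X) (X_sc : @second_countable X)
  (Y_lc : locally_compact [set: Y]) (Y_pc : paracompact Y)
  (Y_haus : hausdorff_space Y) (Y_sc : @second_countable Y)
  (eps : set (set (X * X))) (zeta : set (set (Y * Y)))
  (eps_proper : proper_coarse eps) (eps_conn : coarsely_connected eps)
  (zeta_proper : proper_coarse zeta) (zeta_conn : coarsely_connected zeta)
  (pi : Y -> X) (pi_eq : coarse_equivalence zeta eps pi) :
  cat_iso (MPers eps) (MPers zeta).
Proof.
case: pi_eq => pi_c [pi' [pi'_c pi'_pi pi_pi']].
exists (pull_functor X_lc Y_lc Y_haus Y_sc eps_proper eps_conn zeta_proper zeta_conn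
          pi_c pi_pi').
exists (pull_functor Y_lc X_lc X_haus X_sc zeta_proper zeta_conn eps_proper eps_conn
          pi'_c pi'_pi).
exists (pull_functorK_ob X_lc Y_lc X_haus Y_haus X_sc Y_sc eps_proper eps_conn
          zeta_proper zeta_conn pi_c pi'_c pi_pi' pi'_pi).
exists (pull_functorK_ob Y_lc X_lc Y_haus X_haus Y_sc X_sc zeta_proper zeta_conn
          eps_proper eps_conn pi'_c pi_c pi'_pi pi_pi').
by split=> a b h; apply: pull_functorK_hom.
Qed.
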